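(* Let $R$ be a tolerance relation on $X=\{1,\ldots,n\}$ and let $A(R)$ be its tolerance algebra. Then $R$ is an equivalence relation if and only if $A(R)$ has no subalgebra isomorphic to $\mathfrak{A}_3$.
   Context: A tolerance relation on a set $X$ is a reflexive and symmetric relation $R\subset X\times X$. For $R$ a tolerance relation on $X=\{1,\ldots,n\}$, the tolerance algebra $A(R)$ is the complex vector space with basis $\{E_{ij}:(i,j)\in R\}$ (equivalently, the $n\times n$ complex matrices $a$ with $a_{ij}=0$ whenever $(i,j)\notin R$), with bilinear product determined by $E_{ij}\star E_{kl}=\delta_{jk}E_{il}$ if $(i,l)\in R$ and $E_{ij}\star E_{kl}=0$ otherwise, and involution $(E_{ij})^*=E_{ji}$ extended conjugate-linearly (i.e. $a\star b$ is the matrix product $ab$ with the entries in positions $(i,l)\notin R$ set to zero). $\mathfrak{A}_3$ denotes the tolerance algebra of the relation on $\{1,2,3\}$ with $1\sim 2$, $2\sim 3$, $1\not\sim 3$ (together with reflexivity and symmetry), i.e. $3\times 3$ matrices with vanishing $(1,3)$ and $(3,1)$ entries, with product the matrix product followed by setting the $(1,3)$ and $(3,1)$ entries to zero. *)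

From HB Require Import structures.
From mathcomp Require Import all_boot all_order all_algebra.
From mathcomp Require Import reals.
From mathcomp Require Import complex.
Set Implicit Arguments. Unset Strict Implicit. Unset Printing Implicit Defensive.
Import GRing.Theory Num.Theory.
Local Open Scope ring_scope.

Section Tolerance.
Variables (R : realType) (n : nat) (r : rel 'I_n).

Definition tolerance_rel := reflexive r /\ symmetric r.

Definition is_equivalence := [/\ reflexive r, symmetric r & transitive r].

Definition inA (a : 'M[R[i]]_n) : Prop := forall i j, ~~ r i j -> a i j = 0.

Definition tprod (a b : 'M[R[i]]_n) : 'M[R[i]]_n :=
  \matrix_(i, l) (if r i l then (a *m b) i l else 0).

Definition tstar (a : 'M[R[i]]_n) : 'M[R[i]]_n :=
  \matrix_(i, j) (a j i)^*.

Definition is_subalgebra (S : 'M[R[i]]_n -> Prop) : Prop :=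
  (forall a, S a -> inA a) /\
  S 0 /\
  (forall a b, S a -> S b -> S (a + b)) /\
  (forall (c : R[i]) a, S a -> S (c *: a)) /\
  (forall a b, S a -> S b -> S (tprod a b)) /\
  (forall a, S a -> S (tstar a)).

End Tolerance.

(* The relation on {1,2,3} (here 'I_3 = {0,1,2}): 1~2, 2~3, 1 not~ 3. *)
Definition r3 : rel 'I_3 :=
  fun i j => ~~ (((i == 0 :> nat) && (j == 2 :> nat)) ||
                 ((i == 2 :> nat) && (j == 0 :> nat))).

Definition iso_to_A3 (R : realType) (n : nat) (r : rel 'I_n)
  (S : 'M[R[i]]_n -> Prop) : Prop :=
  exists f : 'M[R[i]]_3 -> 'M[R[i]]_n,
    (forall a, inA r3 a -> S (f a)) /\
    (forall b, S b -> exists2 a, inA r3 a & f a = b) /\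
    (forall a b, inA r3 a -> inA r3 b -> f a = f b -> a = b) /\
    (forall a b, inA r3 a -> inA r3 b -> f (a + b) = f a + f b) /\
    (forall (c : R[i]) a, inA r3 a -> f (c *: a) = c *: f a) /\
    (forall a b, inA r3 a -> inA r3 b ->
       f (tprod r3 a b) = tprod r (f a) (f b)) /\
    (forall a, inA r3 a -> f (tstar a) = tstar (f a)).

From HB Require Import structures.
From mathcomp Require Import all_boot all_order all_algebra.
From mathcomp Require Import reals.
From mathcomp Require Import complex.
Set Implicit Arguments. Unset Strict Implicit. Unset Printing Implicit Defensive.
Import GRing.Theory Num.Theory.
Local Open Scope ring_scope.

(* If R is transitive, the tolerance product on A(R) is the ordinary matrix
   product, hence associative; but A_3 is not associative, since
   (E_12 E_23) E_32 = 0 while E_12 (E_23 E_32) = E_12, so an injective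
   product-preserving map cannot carry A_3 into A(R).  Conversely, if
   i ~ j ~ k but i and k are not related, the matrices supported on
   {i, j, k}^2 and vanishing at (i, k), (k, i) form a copy of A_3 inside
   A(R). *)

Section ToleranceAlgebra.
Variables (R : realType) (n : nat) (r : rel 'I_n).
Implicit Types (a b c : 'M[R[i]]_n) (p q : 'I_n).

Lemma inA0 : inA r (0 : 'M[R[i]]_n).
Proof. by move=> x y _; rewrite mxE. Qed.

Lemma inAD a b : inA r a -> inA r b -> inA r (a + b).
Proof. by move=> Ha Hb x y nxy; rewrite mxE Ha ?Hb ?addr0. Qed.

Lemma inAZ (z : R[i]) a : inA r a -> inA r (z *: a).
Proof. by move=> Ha x y nxy; rewrite mxE Ha ?mulr0. Qed.

Lemma inA_tprod a b : inA r (tprod r a b).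
Proof. by move=> x y nxy; rewrite mxE (negbTE nxy). Qed.

Lemma inA_tstar a : symmetric r -> inA r a -> inA r (tstar a).
Proof. by move=> r_sym Ha x y nxy; rewrite mxE Ha ?conjC0 // r_sym. Qed.

Lemma inA_delta p q : r p q -> inA r (delta_mx p q : 'M[R[i]]_n).
Proof.
move=> rpq x y nxy; rewrite mxE.
by case: eqP => [ex|]; case: eqP => [ey|] //; rewrite ex ey rpq in nxy.
Qed.

Lemma tprod0l b : tprod r 0 b = 0.
Proof. by apply/matrixP => x y; rewrite mxE mul0mx !mxE if_same. Qed.

Lemma tprod_delta p q p' q' :
  tprod r (delta_mx p q) (delta_mx p' q') =
  if (q == p') && r p q' then delta_mx p q' else 0 :> 'M[R[i]]_n.
Proof.
apply/matrixP => x y; rewrite mxE mul_delta_mx_cond mulmxnE.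
case: (q == p') => /=; last by rewrite mulr0n mxE if_same.
rewrite mulr1n; case rpq: (r p q'); rewrite !mxE;
  by case: eqP => [->|]; case: eqP => [->|]; rewrite ?rpq ?if_same.
Qed.

Section Transitive.
Hypothesis r_trans : transitive r.

(* Off R every term a_iz b_zl of (ab)_il vanishes: (i,z), (z,l) in R would
   put (i,l) in R. *)
Lemma tprod_mulmx a b : inA r a -> inA r b -> tprod r a b = a *m b.
Proof.
move=> Ha Hb; apply/matrixP => x y; rewrite mxE.
case: ifP => // /negbT nxy; rewrite mxE; symmetry; apply: big1 => z _.
case rxz: (r x z); last by rewrite Ha ?rxz ?mul0r.
case rzy: (r z y); last by rewrite Hb ?rzy ?mulr0.
by rewrite (r_trans rxz rzy) in nxy.
Qed.

Lemma tprodA a b c : inA r a -> inA r b -> inA r c ->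
  tprod r (tprod r a b) c = tprod r a (tprod r b c).
Proof.
move=> Ha Hb Hc; have Hab := inA_tprod a b; have Hbc := inA_tprod b c.
rewrite (tprod_mulmx Hab Hc) (tprod_mulmx Ha Hbc).
by rewrite (tprod_mulmx Ha Hb) (tprod_mulmx Hb Hc) mulmxA.
Qed.

End Transitive.
End ToleranceAlgebra.

Lemma tprod_r3_not_assoc (R : realType) :
  tprod r3 (tprod r3 (delta_mx 0 1) (delta_mx 1 2)) (delta_mx 2 1) !=
  tprod r3 (delta_mx 0 1) (tprod r3 (delta_mx 1 2) (delta_mx 2 1))
  :> 'M[R[i]]_3.
Proof.
rewrite !tprod_delta !eqxx /= tprod0l.
apply/eqP => /matrixP/(_ 0 1); rewrite !mxE !eqxx => /eqP.
by rewrite eq_sym oner_eq0.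
Qed.

Lemma transitive_no_A3 (R : realType) (n : nat) (r : rel 'I_n)
    (S : 'M[R[i]]_n -> Prop) :
  transitive r -> is_subalgebra r S -> ~ iso_to_A3 r S.
Proof.
move=> r_trans [S_inA _] [f [fS [_ [f_inj [_ [_ [fM _]]]]]]].
have f_inA a : inA r3 a -> inA r (f a) by move=> Ha; apply/S_inA/fS.
have E01 : inA r3 (delta_mx 0 1 : 'M[R[i]]_3) by apply: inA_delta.
have E12 : inA r3 (delta_mx 1 2 : 'M[R[i]]_3) by apply: inA_delta.
have E21 : inA r3 (delta_mx 2 1 : 'M[R[i]]_3) by apply: inA_delta.
apply: (elimN eqP (tprod_r3_not_assoc R)).
apply: f_inj; [exact: inA_tprod | exact: inA_tprod |].
rewrite !fM //; try exact: inA_tprod.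
by apply: tprodA => //; apply: f_inA.
Qed.

Section CornerEmbedding.
Variables (R : realType) (m n : nat) (s : rel 'I_m) (r : rel 'I_n).
Variable e : 'I_m -> 'I_n.
Hypotheses (e_inj : injective e) (e_rel : forall p q, r (e p) (e q) = s p q).
Implicit Types (a b : 'M[R[i]]_m).

Definition corner_preim (x : 'I_n) : option 'I_m := [pick p | e p == x].

Lemma corner_preimP x p : corner_preim x = Some p -> e p = x.
Proof. by rewrite /corner_preim; case: pickP => // q /eqP eq_qx [<-]. Qed.

Lemma corner_preim_e p : corner_preim (e p) = Some p.
Proof.
rewrite /corner_preim; case: pickP => [q /eqP/e_inj -> // | /(_ p)].
by rewrite eqxx.
Qed.

Definition corner_mx a : 'M[R[i]]_n :=
  \matrix_(x, y) if corner_preim x is Some p then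
                   if corner_preim y is Some q then a p q else 0
                 else 0.

Lemma corner_mxE a p q : corner_mx a (e p) (e q) = a p q.
Proof. by rewrite mxE !corner_preim_e. Qed.

Lemma corner_mx_outl a x y : corner_preim x = None -> corner_mx a x y = 0.
Proof. by rewrite mxE => ->. Qed.

Lemma corner_mx_outr a x y : corner_preim y = None -> corner_mx a x y = 0.
Proof. by rewrite mxE => ->; case: (corner_preim x). Qed.

Lemma corner_mx_inj : injective corner_mx.
Proof.
by move=> a b eq_ab; apply/matrixP => p q; rewrite -!corner_mxE eq_ab.
Qed.

Lemma corner_mxD a b : corner_mx (a + b) = corner_mx a + corner_mx b.
Proof.
apply/matrixP => x y; rewrite !mxE.
by case: (corner_preim x) => [p|]; case: (corner_preim y) => [q|];
  rewrite ?mxE ?addr0.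
Qed.

Lemma corner_mxZ (z : R[i]) a : corner_mx (z *: a) = z *: corner_mx a.
Proof.
apply/matrixP => x y; rewrite !mxE.
by case: (corner_preim x) => [p|]; case: (corner_preim y) => [q|];
  rewrite ?mxE ?mulr0.
Qed.

Lemma corner_mx_tstar a : corner_mx (tstar a) = tstar (corner_mx a).
Proof.
apply/matrixP => x y; rewrite !mxE.
by case: (corner_preim x) => [p|]; case: (corner_preim y) => [q|];
  rewrite ?mxE ?conjC0.
Qed.

Lemma corner_mx_inA a : inA s a -> inA r (corner_mx a).
Proof.
move=> Ha x y nxy.
case Ex: (corner_preim x) => [p|]; last exact: corner_mx_outl.
case Ey: (corner_preim y) => [q|]; last exact: corner_mx_outr.
rewrite -(corner_preimP Ex) -(corner_preimP Ey) e_rel in nxy *.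
by rewrite corner_mxE Ha.
Qed.

Lemma sum_corner (F : 'I_n -> R[i]) :
  (forall x, corner_preim x = None -> F x = 0) -> \sum_x F x = \sum_p F (e p).
Proof.
move=> F_out; rewrite (bigID (fun x => corner_preim x != None)) /=.
rewrite [X in _ + X]big1 ?addr0; last by move=> x /negPn/eqP; apply: F_out.
rewrite (reindex_omap e corner_preim) /=.
  by apply: eq_bigl => p; rewrite corner_preim_e /= eqxx.
by move=> x; case E: corner_preim => [p|] //= _; rewrite (corner_preimP E).
Qed.

Lemma corner_mx_tprod a b :
  corner_mx (tprod s a b) = tprod r (corner_mx a) (corner_mx b).
Proof.
apply/matrixP => x y; rewrite [RHS]mxE.
case Ex: (corner_preim x) => [p|].
  case Ey: (corner_preim y) => [q|].
    rewrite -(corner_preimP Ex) -(corner_preimP Ey) corner_mxE e_rel !mxE.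
    case: ifP => // _; rewrite (sum_corner _); last first.
      by move=> z z_out; rewrite (corner_mx_outl _ _ z_out) mulr0.
    by apply: eq_bigr => z _; rewrite !corner_mxE.
  rewrite corner_mx_outr // mxE; case: ifP => // _.
  by symmetry; apply: big1 => z _; rewrite (corner_mx_outr b z Ey) mulr0.
rewrite corner_mx_outl // mxE; case: ifP => // _.
by symmetry; apply: big1 => z _; rewrite (corner_mx_outl a z Ex) mul0r.
Qed.

Definition corner_image (b : 'M[R[i]]_n) : Prop :=
  exists2 a, inA s a & corner_mx a = b.

Lemma corner_image_subalgebra : symmetric r -> is_subalgebra r corner_image.
Proof.
move=> r_sym; have s_sym : symmetric s by move=> p q; rewrite -!e_rel r_sym.
split; first by move=> _ [a Ha <-]; apply: corner_mx_inA.
split; first by exists 0;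
  [apply: inA0 | rewrite -(scale0r 0) corner_mxZ scale0r].
split; first by move=> _ _ [a Ha <-] [b Hb <-]; exists (a + b);
  [apply: inAD | apply: corner_mxD].
split; first by move=> z _ [a Ha <-]; exists (z *: a);
  [apply: inAZ | apply: corner_mxZ].
split; first by move=> _ _ [a Ha <-] [b Hb <-]; exists (tprod s a b);
  [apply: inA_tprod | apply: corner_mx_tprod].
by move=> _ [a Ha <-]; exists (tstar a);
  [apply: inA_tstar | apply: corner_mx_tstar].
Qed.

End CornerEmbedding.

Lemma corner_image_iso_A3 (R : realType) (n : nat) (r : rel 'I_n)
    (e : 'I_3 -> 'I_n) :
  injective e -> (forall p q, r (e p) (e q) = r3 p q) ->
  iso_to_A3 r (corner_image r3 e : 'M[R[i]]_n -> Prop).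
Proof.
move=> e_inj e_rel; exists (corner_mx e).
split; first by move=> a Ha; exists a.
split; first by move=> _ [a Ha <-]; exists a.
split; first by move=> a b _ _; apply: corner_mx_inj.
split; first by move=> a b _ _; apply: corner_mxD.
split; first by move=> z a _; apply: corner_mxZ.
split; first by move=> a b _ _; apply: corner_mx_tprod.
by move=> a _; apply: corner_mx_tstar.
Qed.

Lemma r3_embedding (n : nat) (r : rel 'I_n) (i j k : 'I_n) :
  reflexive r -> symmetric r -> r i j -> r j k -> ~~ r i k ->
  exists e : 'I_3 -> 'I_n, injective e /\ forall p q, r (e p) (e q) = r3 p q.
Proof.
move=> r_refl r_sym rij rjk nik; exists (tnth [tuple i; j; k]); split.
  have nij : i != j by apply: contraNneq nik => ->.
  have nik' : i != k by apply: contraNneq nik => ->; apply: r_refl.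
  have njk : j != k by apply: contraNneq nik => <-.
  by apply/tuple_uniqP; rewrite /= !inE andbT negb_or nij nik' njk.
have nki : ~~ r k i by rewrite r_sym.
by case=> [[|[|[|?]]] ?] // [[|[|[|?]]] ?] //=;
  rewrite ?r_refl ?rij ?rjk ?(negbTE nik) ?(negbTE nki) // r_sym.
Qed.

Theorem lemma3p6 (R : realType) (n : nat) (r : rel 'I_n) :
  tolerance_rel r ->
  (is_equivalence r <->
   ~ (exists S : 'M[R[i]]_n -> Prop, is_subalgebra r S /\ iso_to_A3 r S)).
Proof.
move=> [r_refl r_sym]; split.
  by move=> [_ _ r_trans] [S [S_sub]]; apply: transitive_no_A3 r_trans S_sub.
move=> noA3; split=> // j i k rij rjk; apply/negPn/negP => nik; apply: noA3.
have [e [e_inj e_rel]] := r3_embedding r_refl r_sym rij rjk nik.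
exists (corner_image r3 e); split.
  exact: corner_image_subalgebra.
exact: corner_image_iso_A3.
Qed.
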